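(* Let $R$ be a commutative graded ring, $P$ a homogeneous prime ideal, $S=h(R\setminus P)$ and $M$ a graded $R$-module. Then $(S^{-1}M)_0=0$ if and only if $\mathrm{Hom}_{Gr(R)}(M,E^g(R/P))=0$.
   Context: $h(R\setminus P)$ is the set of homogeneous elements of $R$ not in $P$; $S^{-1}M$ is the graded localisation and $(S^{-1}M)_0$ its degree-zero component. $Gr(R)$ is the category of graded $R$-modules with degree-preserving maps and $E^g$ the injective envelope in $Gr(R)$. *)

(* Z-graded commutative rings and graded modules, encoded by
   predicates picking out the homogeneous components. *)
From HB Require Import structures.
From mathcomp Require Import all_boot all_order all_algebra.
Set Implicit Arguments. Unset Strict Implicit. Unset Printing Implicit Defensive.
Import GRing.Theory.
Local Open Scope ring_scope.

(* G n = the degree-n homogeneous component (an additive subgroup); V is the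
   internal direct sum of the G n, n : int. *)
Definition is_grading (V : zmodType) (G : int -> V -> Prop) : Prop :=
  [/\ forall n, G n 0 /\ (forall x y, G n x -> G n y -> G n (x - y)),
      forall x : V, exists (s : seq int) (f : int -> V),
        [/\ uniq s, forall n, G n (f n) & x = \sum_(n <- s) f n]
    & forall (s : seq int) (f : int -> V), uniq s -> (forall n, G n (f n)) ->
        \sum_(n <- s) f n = 0 -> forall n, n \in s -> f n = 0 ].

Definition closed_under_components (V : zmodType) (G : int -> V -> Prop)
  (X : V -> Prop) : Prop :=
  forall (x : V) (s : seq int) (f : int -> V), X x -> uniq s ->
    (forall n, G n (f n)) -> x = \sum_(n <- s) f n -> forall n, n \in s -> X (f n).

Definition graded_ring (R : comNzRingType) (RG : int -> R -> Prop) : Prop :=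
  [/\ is_grading RG, RG 0 1 &
      forall m n (a b : R), RG m a -> RG n b -> RG (m + n)%R (a * b)].

Definition graded_module (R : comNzRingType) (RG : int -> R -> Prop)
  (M : lmodType R) (MG : int -> M -> Prop) : Prop :=
  is_grading MG /\
  forall m n (a : R) (x : M), RG m a -> MG n x -> MG (m + n)%R (a *: x).

Definition homogeneous_prime (R : comNzRingType) (RG : int -> R -> Prop)
  (P : R -> Prop) : Prop :=
  [/\ P 0, forall x y, P x -> P y -> P (x + y) & forall a x, P x -> P (a * x)] /\
  [/\ ~ P 1, forall x y, P (x * y) -> P x \/ P y & closed_under_components RG P].

Definition hS (R : comNzRingType) (RG : int -> R -> Prop) (P : R -> Prop) (s : R) : Prop :=
  (exists n, RG n s) /\ ~ P s.

(* (S^{-1} M)_0 = 0.  (S^{-1}M)_0 consists of the fractions m/s with s in S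
   homogeneous of degree e and m in M_e; m/s = 0 in S^{-1}M iff t m = 0 for
   some t in S. *)
Definition loc0_zero (R : comNzRingType) (RG : int -> R -> Prop) (P : R -> Prop)
  (M : lmodType R) (MG : int -> M -> Prop) : Prop :=
  forall (e : int) (m : M) (s : R), MG e m -> hS RG P s -> RG e s ->
    exists t, hS RG P t /\ t *: m = 0.

Definition gr_hom (R : comNzRingType) (A B : lmodType R)
  (AG : int -> A -> Prop) (BG : int -> B -> Prop) (f : A -> B) : Prop :=
  (forall (a : R) (u v : A), f (a *: u + v) = a *: f u + f v) /\
  (forall n x, AG n x -> BG n (f x)).

Definition gr_injective (R : comNzRingType) (RG : int -> R -> Prop)
  (E : lmodType R) (EG : int -> E -> Prop) : Prop :=
  forall (A B : lmodType R) (AG : int -> A -> Prop) (BG : int -> B -> Prop)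
         (j : A -> B) (g : A -> E),
    graded_module RG AG -> graded_module RG BG ->
    gr_hom AG BG j -> injective j -> gr_hom AG EG g ->
    exists h : B -> E, gr_hom BG EG h /\ (forall x, h (j x) = g x).

Definition gr_submodule (R : comNzRingType) (E : lmodType R)
  (EG : int -> E -> Prop) (N : E -> Prop) : Prop :=
  [/\ N 0, forall x y, N x -> N y -> N (x + y),
      forall (a : R) x, N x -> N (a *: x)
    & closed_under_components EG N].

(* (E, i) is an injective envelope of R/P in Gr(R): the graded monomorphism
   R/P -> E is represented by the degree-preserving R-linear map i : R -> E
   with kernel exactly P; E is injective in Gr(R) and i(R) is essential in E
   with respect to graded submodules. *)
Definition gr_envelope_of_quot (R : comNzRingType) (RG : int -> R -> Prop)
  (P : R -> Prop) (E : lmodType R) (EG : int -> E -> Prop) (i : R -> E) : Prop :=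
  [/\ (forall (a u v : R), i (a * u + v) = a *: i u + i v),
      (forall n x, RG n x -> EG n (i x)),
      (forall x, i x = 0 <-> P x),
      gr_injective RG EG
    & forall N : E -> Prop, gr_submodule EG N ->
        (forall x, N x -> (exists r, x = i r) -> x = 0) ->
        forall x, N x -> x = 0].

From HB Require Import structures.
From mathcomp Require Import all_boot all_order all_algebra.
From mathcomp Require Import boolp.
From Stdlib Require Import ClassicalEpsilon.
Set Implicit Arguments. Unset Strict Implicit. Unset Printing Implicit Defensive.
Import GRing.Theory.
Local Open Scope ring_scope.

(* Write i : R -> E for the embedding of R/P.
   (=>) If h : M -> E is graded and h m = y <> 0 for a homogeneous m of degree
   e, essentiality of i(R) applied to the graded submodule R y gives
   homogeneous q, g with g \notin P and q y = i g.  Then q m / g lies in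
   (S^-1 M)_0, so t q m = 0 for some t in S, whence i (t g) = t q y = 0 and
   t g \in P, contradicting primality.
   (<=) If m / s <> 0 in (S^-1 M)_0, no homogeneous element outside P kills m,
   so (comparing homogeneous components) the annihilator of m lies in P and
   r m |-> i (r s) is a well-defined graded map R m -> E.  Injectivity of E
   extends it to h : M -> E with h m = i s <> 0. *)

Lemma big_mem_restrict (V : zmodType) (s1 s : seq int) (f : int -> V) :
  uniq s1 -> uniq s -> {subset s1 <= s} ->
  \sum_(n <- s) (if n \in s1 then f n else 0) = \sum_(n <- s1) f n.
Proof.
move=> u1 u sub; rewrite -big_mkcond -big_filter; apply: perm_big.
apply: uniq_perm => [||x]; rewrite ?filter_uniq // mem_filter.
by case: (boolP (x \in s1)) => // /sub ->.
Qed.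

Lemma mem_map_addr (u : seq int) (e n : int) :
  (n \in [seq j + e | j <- u]) = (n - e \in u).
Proof. by rewrite -{1}(subrK e n) (mem_map (addIr e)). Qed.

Section Components.
Variables (V : zmodType) (G : int -> V -> Prop).

Definition is_component (n : int) (x y : V) : Prop :=
  exists s (f : int -> V), [/\ uniq s, forall k, G k (f k),
    x = \sum_(k <- s) f k & y = if n \in s then f n else 0].

(* Unspecified when x has no homogeneous decomposition, which a grading rules out. *)
Definition component (n : int) (x : V) : V :=
  epsilon (inhabits 0) (is_component n x).

Hypothesis HG : is_grading G.

Lemma grading0 n : G n 0.
Proof. by case: HG => H _ _; case: (H n). Qed.

Lemma gradingB n x y : G n x -> G n y -> G n (x - y).
Proof. by case: HG => H _ _; case: (H n) => _; apply. Qed.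

Lemma grading_decomp_unique s1 f1 s2 f2 :
  uniq s1 -> uniq s2 -> (forall n, G n (f1 n)) -> (forall n, G n (f2 n)) ->
  \sum_(n <- s1) f1 n = \sum_(n <- s2) f2 n ->
  forall n, (if n \in s1 then f1 n else 0) = (if n \in s2 then f2 n else 0).
Proof.
move=> u1 u2 G1 G2 E12 n; set s := undup (s1 ++ s2).
pose g k := (if k \in s1 then f1 k else 0) - (if k \in s2 then f2 k else 0).
have Gg k : G k (g k) by apply: gradingB; case: ifP => _ //; exact: grading0.
have sum_g : \sum_(k <- s) g k = 0.
  rewrite sumrB !big_mem_restrict ?undup_uniq ?E12 ?subrr // => k;
  by rewrite mem_undup mem_cat => ->; rewrite ?orbT.
case: (boolP (n \in s)) => [ns|].
  apply/eqP; rewrite -subr_eq0; apply/eqP.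
  by case: HG => _ _ /(_ s g); apply=> //; exact: undup_uniq.
by rewrite mem_undup mem_cat negb_or => /andP[/negPf -> /negPf ->].
Qed.

Lemma component_decomp n x s f : uniq s -> (forall k, G k (f k)) ->
  x = \sum_(k <- s) f k -> component n x = if n \in s then f n else 0.
Proof.
move=> us Gf xE.
rewrite /component.
have [|t [g [ut Gg xE' ->]]] := epsilon_spec (inhabits 0) (is_component n x).
  by exists (if n \in s then f n else 0), s, f.
by apply: grading_decomp_unique => //; rewrite -xE -xE'.
Qed.

Lemma component_support x : exists2 s, uniq s & x = \sum_(n <- s) component n x.
Proof.
case: HG => _ /(_ x) [s [f [us Gf xE]]] _; exists s => //.
rewrite [LHS]xE big_seq_cond [RHS]big_seq_cond; apply: eq_bigr => n /andP[ns _].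
by rewrite (component_decomp n us Gf xE) ns.
Qed.

Lemma component_homog x n : G n (component n x).
Proof.
case: HG => _ /(_ x) [s [f [us Gf xE]]] _.
by rewrite (component_decomp n us Gf xE); case: ifP => _ //; exact: grading0.
Qed.

Lemma component_id n x k : G n x -> component k x = if k == n then x else 0.
Proof.
move=> Gx; have Gf j : G j (if j == n then x else 0).
  by case: eqP => [->|_] //; exact: grading0.
rewrite (@component_decomp k x [:: n] _ _ Gf) ?mem_seq1 //; first by case: eqP.
by rewrite big_cons big_nil eqxx addr0.
Qed.

Lemma component0 n : component n 0 = 0.
Proof. by rewrite (component_id n (grading0 0)); case: ifP. Qed.

Lemma mem_of_components (X : V -> Prop) x : X 0 ->
  (forall u v, X u -> X v -> X (u + v)) -> (forall n, X (component n x)) -> X x.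
Proof.
move=> X0 XD Xc; have [s _ ->] := component_support x.
by elim: s => [|n s IH]; rewrite ?big_nil ?big_cons //; apply: XD.
Qed.

Lemma closed_under_components_of_component (X : V -> Prop) :
  (forall x n, X x -> X (component n x)) -> closed_under_components G X.
Proof.
move=> Xc x s f Xx us Gf xE n ns.
by have := Xc x n Xx; rewrite (component_decomp n us Gf xE) ns.
Qed.

End Components.

Lemma component_morph (V W : zmodType) (GV : int -> V -> Prop) (GW : int -> W -> Prop)
    (f : V -> W) :
  is_grading GV -> is_grading GW -> {morph f : u v / u + v} ->
  (forall n x, GV n x -> GW n (f x)) ->
  forall n x, component GW n (f x) = f (component GV n x).
Proof.
move=> HV HW fD fG n x.
have f0 : f 0 = 0 by apply: (@addrI _ (f 0)); rewrite -fD !addr0.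
have [s us xE] := component_support HV x.
rewrite {1}xE (big_morph f fD f0).
rewrite (@component_decomp _ _ HW n _ s (fun k => f (component GV k x)) us) //.
  by case: ifP => // ns; rewrite (component_decomp HV n us (component_homog HV x) xE) ns f0.
by move=> k; apply: fG; exact: component_homog.
Qed.

Lemma component_scale (R : comNzRingType) (RG : int -> R -> Prop)
    (M : lmodType R) (MG : int -> M -> Prop) :
  is_grading RG -> graded_module RG MG ->
  forall e m r n, MG e m -> component MG n (r *: m) = component RG (n - e) r *: m.
Proof.
move=> HRG [HMG MGZ] e m r n Gm.
have [u uu rE] := component_support HRG r.
have shiftE : r *: m = \sum_(k <- [seq j + e | j <- u]) component RG (k - e) r *: m.
  by rewrite big_map {1}rE scaler_suml; apply: eq_bigr => j _; rewrite addrK.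
rewrite (component_decomp HMG n _ _ shiftE) ?mem_map_addr.
- case: ifP => // nu.
  by rewrite (component_decomp HRG (n - e) uu (component_homog HRG r) rE) nu scale0r.
- by rewrite map_inj_uniq //; exact: addIr.
by move=> k; rewrite -[k](subrK e); apply: MGZ Gm; rewrite addrK; exact: component_homog.
Qed.

Lemma sub_grading (V : zmodType) (G : int -> V -> Prop) (S : pred V) (U : subZmodType S) :
  is_grading G -> (forall x n, S x -> S (component G n x)) ->
  is_grading (fun n (u : U) => G n (val u)).
Proof.
move=> HG Sc; split.
- move=> n; split=> [|u v]; first by rewrite raddf0; exact: grading0.
  by rewrite raddfB; exact: gradingB.
- move=> u; have [s us uE] := component_support HG (val u).
  exists s, (fun n => insubd u (component G n (val u))).
  have valK n : val (insubd u (component G n (val u))) = component G n (val u).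
    by rewrite insubdK //; exact: Sc (valP u).
  split=> // [n|]; first by rewrite valK; exact: component_homog.
  by apply: val_inj; rewrite raddf_sum {1}uE; apply: eq_bigr => n _; rewrite -[LHS]valK.
- move=> s f us Gf sum0 n ns; apply: val_inj; rewrite raddf0.
  have := grading_decomp_unique HG us (isT : uniq [::]) Gf (grading0 HG).
  by rewrite big_nil -raddf_sum sum0 raddf0 => /(_ erefl n); rewrite ns.
Qed.

Section LinearFunctions.
Variables (R : comNzRingType) (A B : lmodType R) (f : A -> B).
Hypothesis f_lin : linear f.

Lemma linear_fun0 : f 0 = 0.
Proof.
have f00 := f_lin 1 0 0; rewrite scale1r addr0 scale1r in f00.
by apply: (@addIr _ (f 0)); rewrite add0r -f00.
Qed.

Lemma linear_funD : {morph f : u v / u + v}.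
Proof. by move=> u v; have := f_lin 1 u v; rewrite !scale1r. Qed.

Lemma linear_funZ a : {morph f : u / a *: u}.
Proof. by move=> u; rewrite -[_ *: u]addr0 f_lin linear_fun0 addr0. Qed.

End LinearFunctions.

Definition cyclic_submod (R : comNzRingType) (M : lmodType R) (m : M) : pred M :=
  fun x => `[< exists r : R, x = r *: m >].

Lemma cyclic_submodP (R : comNzRingType) (M : lmodType R) (m x : M) :
  reflect (exists r, x = r *: m) (cyclic_submod m x).
Proof. exact: asboolP. Qed.

Lemma cyclic_submod_closed (R : comNzRingType) (M : lmodType R) (m : M) :
  submod_closed (cyclic_submod m).
Proof.
split; first by apply/cyclic_submodP; exists 0; rewrite scale0r.
move=> a u v /cyclic_submodP[r ->] /cyclic_submodP[q ->]; apply/cyclic_submodP.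
by exists (a * r + q); rewrite scalerDl scalerA.
Qed.

HB.instance Definition _ (R : comNzRingType) (M : lmodType R) (m : M) :=
  GRing.isSubmodClosed.Build R M (cyclic_submod m) (cyclic_submod_closed m).
HB.instance Definition _ (R : comNzRingType) (M : lmodType R) (m : M) :=
  [SubChoice_isSubLmodule of {x : M | cyclic_submod m x} by <:].

Section CyclicGraded.
Variables (R : comNzRingType) (RG : int -> R -> Prop).
Hypothesis HR : graded_ring RG.
Variables (M : lmodType R) (MG : int -> M -> Prop).
Hypothesis HM : graded_module RG MG.
Variables (e : int) (m : M).
Hypothesis m_homog : MG e m.

Let HRG : is_grading RG. Proof. by case: HR. Qed.
Let HMG : is_grading MG. Proof. by case: HM. Qed.

Lemma cyclic_submod_component x n :
  cyclic_submod m x -> cyclic_submod m (component MG n x).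
Proof.
move=> /cyclic_submodP[r ->]; apply/cyclic_submodP.
by exists (component RG (n - e) r); exact: (component_scale HRG HM).
Qed.

Lemma cyclic_gr_submodule : gr_submodule MG (cyclic_submod m).
Proof.
split=> [|x y|a x|]; [exact: rpred0 | exact: rpredD | exact: rpredZ |].
by apply: (closed_under_components_of_component HMG) => x n; exact: cyclic_submod_component.
Qed.

Lemma cyclic_graded_module :
  graded_module RG (fun n (x : {x : M | cyclic_submod m x}) => MG n (val x)).
Proof.
split; last by case: HM => _ MGZ k n a x; exact: MGZ.
by apply: sub_grading => // x n; exact: cyclic_submod_component.
Qed.

End CyclicGraded.

Section Envelope.
Variables (R : comNzRingType) (RG : int -> R -> Prop) (P : R -> Prop).
Hypotheses (HR : graded_ring RG) (HP : homogeneous_prime RG P).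
Variables (E : lmodType R) (EG : int -> E -> Prop) (i : R -> E).
Hypotheses (HE : graded_module RG EG) (Hi : gr_envelope_of_quot RG P EG i).

Let HRG : is_grading RG. Proof. by case: HR. Qed.
Let HEG : is_grading EG. Proof. by case: HE. Qed.
Let RGM j k a b : RG j a -> RG k b -> RG (j + k) (a * b).
Proof. by case: HR => _ _; apply. Qed.
Let P0 : P 0. Proof. by case: HP => -[]. Qed.
Let PD x y : P x -> P y -> P (x + y). Proof. by case: HP => -[_ + _] _; apply. Qed.
Let PM a x : P x -> P (a * x). Proof. by case: HP => -[_ _ +] _; apply. Qed.
Let P_prime x y : P (x * y) -> P x \/ P y.
Proof. by case: HP => _ [_ P_prime _]; exact: P_prime. Qed.

Let i_lin : linear (i : R^o -> E). Proof. by case: Hi => i_lin _ _ _ _; exact: i_lin. Qed.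
Let i_homog n x : RG n x -> EG n (i x).
Proof. by case: Hi => _ i_homog _ _ _; exact: i_homog. Qed.
Let i_eq0 x : i x = 0 <-> P x. Proof. by case: Hi => _ _ i_eq0 _ _; exact: i_eq0. Qed.

Lemma envelope_meets_cyclic e y : EG e y -> y <> 0 ->
  exists k g q, [/\ RG k g, ~ P g, RG (k - e) q & i g = q *: y].
Proof.
move=> Gy y0; have [_ _ _ _ i_essential] := Hi.
have [x [/cyclic_submodP[r ->] [a ra] ra0]] :
    exists x, [/\ cyclic_submod y x, exists a, x = i a & x <> 0].
  apply: contrapT => no_x; apply/y0/(i_essential _ (cyclic_gr_submodule HR HE Gy)).
    move=> x yx ima; apply: contrapT => x0; exact: no_x (ex_intro _ x (And3 yx ima x0)).
  by apply/cyclic_submodP; exists 1; rewrite scale1r.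
have [k nPk] : exists k, ~ P (component RG k a).
  apply/existsNP => all_P; apply/ra0; rewrite ra; apply/i_eq0.
  exact: (mem_of_components HRG).
exists k, (component RG k a), (component RG (k - e) r).
split=> //; try exact: component_homog.
rewrite -(component_scale HRG HE r k Gy) ra (component_morph HRG HEG) //.
exact: linear_funD i_lin.
Qed.

Lemma hom_to_envelope_eq0 (M : lmodType R) (MG : int -> M -> Prop) :
  graded_module RG MG -> loc0_zero RG P MG ->
  forall h : M -> E, gr_hom MG EG h -> forall x, h x = 0.
Proof.
move=> HM L h [h_lin h_homog] x; have [HMG MGZ] := HM.
apply: (mem_of_components HMG (X := fun x => h x = 0)).
- exact: linear_fun0 h_lin.
- by move=> u v hu hv; rewrite (linear_funD h_lin) hu hv addr0.
move=> e; have Gm := component_homog HMG x e; set m := component MG e x in Gm *.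
case: (pselect (h m = 0)) => // hm0; exfalso.
have [k [g [q [Gg nPg Gq ig]]]] := envelope_meets_cyclic (h_homog _ _ Gm) hm0.
have Gqm : MG k (q *: m) by rewrite -[k](subrK e); exact: MGZ.
have [t [[_ nPt] tqm0]] := L k (q *: m) g Gqm (conj (ex_intro _ k Gg) nPg) Gg.
have : i (t * g) = 0.
  by rewrite (linear_funZ i_lin) ig -!(linear_funZ h_lin) tqm0 linear_fun0.
by move=> /i_eq0 /P_prime [].
Qed.

Section CyclicSource.
Variables (M : lmodType R) (MG : int -> M -> Prop).
Hypothesis HM : graded_module RG MG.
Variables (e : int) (m : M).
Hypothesis m_homog : MG e m.

Let HMG : is_grading MG. Proof. by case: HM. Qed.

Lemma annihilator_in_prime :
  ~ (exists t, hS RG P t /\ t *: m = 0) -> forall r, r *: m = 0 -> P r.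
Proof.
move=> no_t r rm0; apply: (mem_of_components HRG) => // n.
apply: contrapT => nPn; apply: no_t; exists (component RG n r).
split; first by split=> //; exists n; exact: component_homog.
by rewrite -[n](addrK e) -(component_scale HRG HM _ _ m_homog) rm0 component0.
Qed.

Lemma cyclic_gr_hom s : RG e s -> (forall r, r *: m = 0 -> P r) ->
  exists2 g : {x : M | cyclic_submod m x} -> E,
    gr_hom (fun n x => MG n (val x)) EG g & forall x r, val x = r *: m -> g x = i (r * s).
Proof.
move=> Gs ann.
pose coeff (x : {x : M | cyclic_submod m x}) :=
  epsilon (inhabits 0) (fun r => val x = r *: m).
have coeffP x : val x = coeff x *: m.
  apply: (epsilon_spec (inhabits 0) (fun r => val x = r *: m)).
  by apply/cyclic_submodP; exact: valP.
have gE x r : val x = r *: m -> i (coeff x * s) = i (r * s).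
  move=> xr; rewrite -[coeff x](subrK r) mulrDl (linear_funD i_lin).
  suff /i_eq0 -> : P ((coeff x - r) * s) by rewrite add0r.
  by rewrite mulrC; apply/PM/ann; rewrite scalerBl -coeffP xr subrr.
exists (fun x => i (coeff x * s)) => //; split.
  move=> a u v; rewrite (gE _ (a * coeff u + coeff v)) ?mulrDl -?mulrA ?i_lin //.
  by rewrite raddfD /= scalerDl -scalerA -!coeffP.
move=> n x Gx.
rewrite (gE x (component RG (n - e) (coeff x))).
  by apply: i_homog; have := RGM (component_homog HRG (coeff x) (n - e)) Gs; rewrite subrK.
by rewrite -(component_scale HRG HM _ _ m_homog) -coeffP (component_id HMG _ Gx) eqxx.
Qed.

End CyclicSource.

Lemma loc0_zero_of_hom_eq0 (M : lmodType R) (MG : int -> M -> Prop) :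
  graded_module RG MG -> (forall h : M -> E, gr_hom MG EG h -> forall x, h x = 0) ->
  loc0_zero RG P MG.
Proof.
move=> HM hom0 e m s Gm [_ nPs] Gs; apply: contrapT => no_t.
have [g g_hom gE] := cyclic_gr_hom HM Gm Gs (annihilator_in_prime HM Gm no_t).
have [_ _ _ E_injective _] := Hi.
have val_hom : gr_hom (fun n x => MG n (val x)) MG (val : {x : M | cyclic_submod m x} -> M).
  by split=> // a u v; rewrite raddfD linearZ.
have [h [h_hom hE]] := E_injective _ _ _ _ _ g (cyclic_graded_module HR HM Gm) HM
  val_hom val_inj g_hom.
have m_in : cyclic_submod m m by apply/cyclic_submodP; exists 1; rewrite scale1r.
apply/nPs/i_eq0; rewrite -[s]mul1r -(gE (Sub m m_in)) ?SubK ?scale1r //.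
by rewrite -hE SubK hom0.
Qed.

End Envelope.

Theorem mainTheorem8 (R : comNzRingType) (RG : int -> R -> Prop)
  (HR : graded_ring RG) (P : R -> Prop) (HP : homogeneous_prime RG P)
  (M : lmodType R) (MG : int -> M -> Prop) (HM : graded_module RG MG)
  (E : lmodType R) (EG : int -> E -> Prop) (HE : graded_module RG EG)
  (i : R -> E) (Hi : gr_envelope_of_quot RG P EG i) :
  loc0_zero RG P MG <->
  (forall h : M -> E, gr_hom MG EG h -> forall x, h x = 0).
Proof.
split; first exact: (hom_to_envelope_eq0 HR HP HE Hi HM).
exact: (loc0_zero_of_hom_eq0 HR HP Hi HM).
Qed.
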